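(* There is an absolute constant $C>0$ with the following property. Let $m\ge1$ and $\pi\in\mathcal P_{\le2}(m)$, and let $N^2_\pi(m)$ be the number of pairs $(\sigma,\tau)$ of commuting involutions in $\mathrm{Sym}_m$ such that $\sigma$ preserves $\pi$. Then \[ N^2_\pi(m)\le C^m(m!)^{\frac34-\frac{\pi_2}{2m}} . \]
   Context: $\mathcal P_{\le2}(m)$ is the set of set partitions of $\{1,\dots,m\}$ with all blocks of size at most $2$, and $\pi_2$ is the number of blocks of size $2$ of $\pi$. A permutation preserves $\pi$ if it maps blocks of $\pi$ to blocks of $\pi$. Involutions are elements $\sigma$ with $\sigma^2=1$ (the identity included). *)

From mathcomp Require Import all_boot all_fingroup.
From Stdlib Require Import Reals.
Set Implicit Arguments. Unset Strict Implicit. Unset Printing Implicit Defensive.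

(* The ground set {1,...,m} is modelled by 'I_m. *)

Definition partition_le2 (m : nat) (pi : {set {set 'I_m}}) : bool :=
  partition pi [set: 'I_m] && [forall B in pi, #|B| <= 2].

Definition nblocks2 (m : nat) (pi : {set {set 'I_m}}) : nat :=
  #|[set B in pi | #|B| == 2]|.

Definition preserves (m : nat) (pi : {set {set 'I_m}}) (s : {perm 'I_m}) : bool :=
  [forall B in pi, (s @: B) \in pi].

Definition involution (m : nat) (s : {perm 'I_m}) : bool := (s * s == 1)%g.

Definition N2 (m : nat) (pi : {set {set 'I_m}}) : nat :=
  #|[set st : {perm 'I_m} * {perm 'I_m} |
      [&& involution st.1, involution st.2,
          (st.1 * st.2 == st.2 * st.1)%g & preserves pi st.1]]|.

(* A pair (s, t) counted by N2 is determined by six subsets of 'I_m, the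
   values of s at the least point of one block from each pair of blocks that
   s swaps, and the values of t at the least point of each <s, t>-orbit on
   which t is neither the identity nor equal to s.  A swapped pair of
   2-blocks costs s two transpositions, a t-orbit leader pairs off with
   another point x <= s x of its orbit, and singletons number m - 2 pi_2;
   together these give at most (3m - 2 pi_2)/4 recorded values, hence
   N2 <= 64^m m^((3m - 2 pi_2)/4).  Since m^m <= 3^m m!, the bound follows
   with C = 192. *)

From Stdlib Require Import Reals Lra.
From mathcomp Require Import all_boot all_fingroup zify.
Set Implicit Arguments. Unset Strict Implicit. Unset Printing Implicit Defensive.

(* [all_fingroup] rebinds the key %R to ring_scope. *)
Delimit Scope R_scope with R.

Lemma card_set (T : finType) : #|{: {set T}}| = 2 ^ #|T|.
Proof. by have := card_powerset [set: T]; rewrite powersetT !cardsT. Qed.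

Lemma disjoint_leq_card (T : finType) (A B C : {set T}) :
  [disjoint A & B] -> A \subset C -> B \subset C -> #|A| + #|B| <= #|C|.
Proof.
move=> dAB AC BC; have /eqP <- : #|A :|: B| == #|A| + #|B| by rewrite (leq_card_setU A B).2.
by rewrite subset_leq_card // subUset AC BC.
Qed.

Section Le2Partition.

Variables (m : nat) (pi : {set {set 'I_m}}).
Hypothesis pi_le2 : partition_le2 pi.

Lemma trivIset_le2 : trivIset pi.
Proof. by case/andP: pi_le2 => /partition_trivIset. Qed.

Lemma mem_pblock_self x : x \in pblock pi x.
Proof. by case/andP: pi_le2 => /and3P[/eqP cov _ _] _; rewrite mem_pblock cov inE. Qed.

Lemma pblock_le2_in x : pblock pi x \in pi.
Proof. by rewrite pblock_mem // -mem_pblock mem_pblock_self. Qed.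

Lemma pblock_eq x y : y \in pblock pi x -> pblock pi y = pblock pi x.
Proof. exact/same_pblock/trivIset_le2. Qed.

Lemma card_pblock_le2 x : #|pblock pi x| <= 2.
Proof. by case/andP: pi_le2 => _ /forall_inP; apply; apply: pblock_le2_in. Qed.

Lemma pblock_le2_other x y z :
  y \in pblock pi x -> z \in pblock pi x -> y != x -> z != x -> y = z.
Proof.
move=> yx zx nyx nzx; have le1 : #|pblock pi x :\ x| <= 1.
  by have := card_pblock_le2 x; rewrite (cardsD1 x) mem_pblock_self.
by apply: (card_le1_eqP le1); rewrite !inE ?nyx ?nzx.
Qed.

Definition block_min x : 'I_m := [arg min_(y < x in pblock pi x) (y : nat)].

Lemma block_min_mem x : block_min x \in pblock pi x.
Proof. by rewrite /block_min; case: arg_minnP => //; apply: mem_pblock_self. Qed.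

Lemma block_min_leq x y : y \in pblock pi x -> block_min x <= y.
Proof.
by rewrite /block_min; case: arg_minnP => [|z _ zmin]; [apply: mem_pblock_self | apply: zmin].
Qed.

Lemma block_min_pblock x y : y \in pblock pi x -> block_min y = block_min x.
Proof.
move=> yx; apply/val_inj/eqP; rewrite eqn_leq !block_min_leq ?(pblock_eq yx) ?block_min_mem //.
by rewrite -(pblock_eq yx) block_min_mem.
Qed.

Lemma eq_block_min x y : (block_min x == block_min y) = (pblock pi x == pblock pi y).
Proof.
apply/eqP/eqP => [e | e]; last by apply: block_min_pblock; rewrite -e mem_pblock_self.
by rewrite -(pblock_eq (block_min_mem x)) e (pblock_eq (block_min_mem y)).
Qed.

Lemma pblock_perm (s : {perm 'I_m}) x : preserves pi s -> pblock pi (s x) = s @: pblock pi x.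
Proof.
move/forall_inP=> spi; apply: def_pblock trivIset_le2 _ _.
  exact/spi/pblock_le2_in.
exact/imset_f/mem_pblock_self.
Qed.

Lemma mem_pblock_perm (s : {perm 'I_m}) x y :
  preserves pi s -> y \in pblock pi x -> s y \in pblock pi (s x).
Proof. by move=> spi yx; rewrite pblock_perm // imset_f. Qed.

Lemma preserving_eq_on_pblock (s s' : {perm 'I_m}) x y :
  preserves pi s -> preserves pi s' -> s x = s' x -> y \in pblock pi x -> s y = s' y.
Proof.
move=> spi s'pi e yx; have [-> // | nyx] := eqVneq y x.
have sy := mem_pblock_perm spi yx; have s'y := mem_pblock_perm s'pi yx.
rewrite -e in s'y; apply: (pblock_le2_other sy s'y).
  by rewrite (inj_eq perm_inj).
by rewrite e (inj_eq perm_inj).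
Qed.

Definition singletons := [set x | #|pblock pi x| == 1].

Lemma singletons_perm (s : {perm 'I_m}) x :
  preserves pi s -> (s x \in singletons) = (x \in singletons).
Proof. by move=> spi; rewrite !inE pblock_perm // card_imset //; apply: perm_inj. Qed.

Definition partner x := odflt x [pick y in pblock pi x :\ x].

Lemma partnerP x : x \notin singletons -> partner x \in pblock pi x /\ partner x != x.
Proof.
rewrite inE /partner => n1; case: pickP => [y | none]; first by rewrite !inE => /andP[-> ->].
have := cardsD1 x (pblock pi x); rewrite mem_pblock_self.
by have /eq_card0 -> : pblock pi x :\ x =i pred0 by []; move=> e; rewrite e in n1.
Qed.

Lemma card_singletons_pairs : #|singletons| + 2 * nblocks2 pi <= m.
Proof.
pose pairs := [set B in pi | #|B| == 2].
have card_cover : #|cover pairs| = 2 * nblocks2 pi.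
  have /eqP -> : #|cover pairs| == \sum_(B in pairs) #|B|.
    rewrite (leq_card_cover pairs).2; apply: trivIsetS trivIset_le2.
    by apply/subsetP => B; rewrite inE => /andP[].
  rewrite (eq_bigr (fun _ => 2)) => [|B]; first by rewrite sum_nat_const mulnC.
  by rewrite inE => /andP[_ /eqP].
suff : #|singletons| + #|cover pairs| <= #|[set: 'I_m]| by rewrite cardsT card_ord card_cover.
apply: disjoint_leq_card; rewrite ?subsetT //.
rewrite disjoint_subset; apply/subsetP => x; rewrite !inE => /eqP x1; apply/bigcupP => -[B].
by rewrite inE => /andP[Bpi /eqP B2] xB; move: x1; rewrite (def_pblock trivIset_le2 Bpi xB) B2.
Qed.

End Le2Partition.

Section Involutions.

Variable m : nat.
Implicit Types (s t : {perm 'I_m}) (x y a b : 'I_m).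

Lemma involutionK s : involution s -> involutive s.
Proof. by move=> /eqP ss x; rewrite -permM ss perm1. Qed.

Lemma commute_permE s t x : (s * t == t * s)%g -> t (s x) = s (t x).
Proof. by move=> /eqP st; rewrite -permM st permM. Qed.

Definition excedances s := [set x : 'I_m | x < s x].
Definition fixed s := [set x : 'I_m | s x == x].

Lemma card_excedances s :
  involution s -> #|[set x : 'I_m | x <= s x]| + #|excedances s| = m.
Proof.
move=> /involutionK sK.
have -> : excedances s = s @: ~: [set x : 'I_m | x <= s x].
  apply/setP => x; rewrite !inE; apply/idP/imsetP => [xs | [y]].
    by exists (s x); rewrite ?inE sK // -ltnNge.
  by rewrite !inE -ltnNge => ys ->; rewrite sK.
by rewrite card_imset ?cardsC ?card_ord //; apply: perm_inj.
Qed.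

Definition smin s (y : 'I_m) : 'I_m := if y <= s y then y else s y.

Lemma sminP s y : smin s y = y \/ smin s y = s y.
Proof. by rewrite /smin; case: ifP; [left | right]. Qed.

Lemma smin_id s y : y <= s y -> smin s y = y.
Proof. by rewrite /smin => ->. Qed.

Lemma smin_leq s y : involution s -> smin s y <= s (smin s y).
Proof.
move=> /involutionK sK; rewrite /smin; case: ifP => // /negbT.
by rewrite sK -ltnNge => /ltnW.
Qed.

Lemma smin_perm s y : involution s -> smin s (s y) = smin s y.
Proof.
move=> /involutionK sK; rewrite /smin sK.
by case: ifP; case: ifP => // h1 h2; apply: ord_inj; move: h1 h2; lia.
Qed.

Lemma smin_inj s a b : involution s -> smin s a = smin s b -> a = b \/ a = s b.
Proof.
move=> /involutionK sK; case: (sminP s a) => ->; case: (sminP s b) => -> e; auto.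
- by right; rewrite -e sK.
- by left; apply: perm_inj e.
Qed.

End Involutions.

Section SwappedBlocks.

Variables (m : nat) (pi : {set {set 'I_m}}).
Hypothesis pi_le2 : partition_le2 pi.
Implicit Types s : {perm 'I_m}.

Definition block_fixed s := [set x | pblock pi (s x) == pblock pi x].

Definition swap_leaders s := [set x | (block_min pi x == x) && (x < block_min pi (s x))].

Lemma preserving_involution_eq s s' :
  involution s -> involution s' -> preserves pi s -> preserves pi s' ->
  block_fixed s = block_fixed s' -> fixed s = fixed s' ->
  {in swap_leaders s, s =1 s'} -> s = s'.
Proof.
move=> sinv s'inv spi s'pi eE eF eDs; have s'K := involutionK s'inv.
have up x : block_min pi x < block_min pi (s x) -> s x = s' x.
  move=> lt; have x0x := block_min_mem pi_le2 x.
  apply: (preserving_eq_on_pblock pi_le2 (x := block_min pi x) spi s'pi); last first.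
    by rewrite (pblock_eq pi_le2 x0x) mem_pblock_self.
  apply: eDs; rewrite inE (block_min_pblock pi_le2 x0x) eqxx /=.
  by rewrite (block_min_pblock pi_le2 (mem_pblock_perm pi_le2 spi x0x)).
apply/permP => x; case: (ltngtP (block_min pi x) (block_min pi (s x))) => [|lt|/val_inj e].
- exact: up.
- have := up (s x); rewrite (involutionK sinv) => /(_ lt) e.
  by rewrite {2}e s'K.
have Ex : pblock pi (s x) = pblock pi x by apply/eqP; rewrite -eq_block_min // e.
have sxx : s x \in pblock pi x by rewrite -Ex mem_pblock_self.
have : x \in block_fixed s' by rewrite -eE inE Ex.
rewrite inE => /eqP E'; have s'xx : s' x \in pblock pi x by rewrite -E' mem_pblock_self.
have [sx | nsx] := eqVneq (s x) x.
  have : x \in fixed s' by rewrite -eF inE sx.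
  by rewrite sx inE => /eqP.
have : x \notin fixed s' by rewrite -eF inE.
by rewrite inE => ns'x; apply: pblock_le2_other s'xx _ ns'x.
Qed.

Lemma swap_leaders_sub s : swap_leaders s \subset excedances s.
Proof.
apply/subsetP => x; rewrite !inE => /andP[_ lt].
exact: leq_trans lt (block_min_leq pi_le2 (mem_pblock_self pi_le2 _)).
Qed.

Lemma card_swap_leaders s : involution s -> preserves pi s ->
  #|swap_leaders s| + #|swap_leaders s :\: singletons pi| <= #|excedances s|.
Proof.
move=> sinv spi; have sK := involutionK sinv.
have partner_facts x : x \in swap_leaders s :\: singletons pi ->
    [/\ block_min pi (partner pi x) = x, block_min pi (s (partner pi x)) = block_min pi (s x),
        x < block_min pi (s x) & partner pi x != x].
  case/setDP; rewrite inE => /andP[/eqP bx lt] nS; have [px npx] := partnerP pi_le2 nS.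
  rewrite (block_min_pblock pi_le2 px) bx.
  by rewrite (block_min_pblock pi_le2 (mem_pblock_perm pi_le2 spi px)).
pose f x := smin s (partner pi x).
have f_inj : {in swap_leaders s :\: singletons pi &, injective f}.
  move=> x1 x2 /partner_facts[p1 sp1 lt1 _] /partner_facts[p2 sp2 lt2 _] /(smin_inj sinv).
  case=> [e | e]; first by rewrite -p1 -p2 e.
  have : block_min pi (s (partner pi x1)) = x2 by rewrite e sK p2.
  by move: lt1 lt2; rewrite -sp1 => + + e2; rewrite e2 -sp2 -e p1; lia.
rewrite addnC -(card_in_imset f_inj); apply: disjoint_leq_card (swap_leaders_sub s).
- rewrite disjoint_subset; apply/subsetP => _ /imsetP[x xD ->]; rewrite !inE.
  have [px spx xlt npx] := partner_facts x xD.
  rewrite /f; case: (sminP s (partner pi x)) => ->; apply/negP => /andP[/eqP ep lt].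
    by rewrite -ep px eqxx in npx.
  by move: lt; rewrite sK px -ep spx; move: xlt; lia.
- apply/subsetP => _ /imsetP[x xD ->]; have [px spx xlt _] := partner_facts x xD.
  set p := partner pi x; have nsp : (s p : nat) != p.
    by apply/eqP => /val_inj e; move: xlt; rewrite -spx e px; lia.
  by rewrite inE /f /smin -/p; case: ifP => h1; rewrite ?sK; move: h1 nsp; lia.
Qed.

Lemma card_swap_leaders_singletons s : involution s -> preserves pi s ->
  2 * #|swap_leaders s :&: singletons pi| + 2 * nblocks2 pi <= m.
Proof.
move=> sinv spi; have sK := involutionK sinv.
set DS := swap_leaders s :&: singletons pi.
suff : #|DS| + #|s @: DS| <= #|singletons pi|.
  by rewrite card_imset; [have := card_singletons_pairs pi_le2; lia | apply: perm_inj].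
apply: disjoint_leq_card; last first.
- by apply/subsetP => _ /imsetP[x /setIP[_ xS] ->]; rewrite singletons_perm.
- by apply/subsetP => x /setIP[].
rewrite disjoint_subset; apply/subsetP => x /setIP[xD _]; rewrite inE.
apply/imsetP => -[y /setIP[yD _] e].
have := subsetP (swap_leaders_sub s) _ xD; have := subsetP (swap_leaders_sub s) _ yD.
by rewrite !inE e sK; lia.
Qed.

End SwappedBlocks.

Section CommutingInvolutions.

Variables (m : nat) (s : {perm 'I_m}).
Hypothesis s_inv : involution s.
Implicit Types (t : {perm 'I_m}) (x y z : 'I_m).

Definition klein_orbit t x := [set x; s x; t x; s (t x)].

Definition coincidences t := [set x : 'I_m | t x == s x].

Definition orbit_leaders t := [set x : 'I_m | (x <= s x) && (x < smin s (t x))].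

Section Orbit.

Variable t : {perm 'I_m}.
Hypotheses (t_inv : involution t) (st : (s * t == t * s)%g).

Lemma klein_orbitP x y :
  reflect [\/ y = x, y = s x, y = t x | y = s (t x)] (y \in klein_orbit t x).
Proof.
rewrite !inE -!orbA; apply: (iffP or4P) => [[] /eqP | []] ->; rewrite ?eqxx ?orbT;
  by [apply: Or41 | apply: Or42 | apply: Or43 | apply: Or44].
Qed.

Lemma klein_orbit_sym x y : y \in klein_orbit t x -> x \in klein_orbit t y.
Proof.
have sK := involutionK s_inv; have tK := involutionK t_inv.
case/klein_orbitP => ->; apply/klein_orbitP.
- exact: Or41.
- by apply: Or42; rewrite sK.
- by apply: Or43; rewrite tK.
- by apply: Or44; rewrite -(commute_permE _ st) sK tK.
Qed.

Lemma klein_orbitS x y : y \in klein_orbit t x -> s y \in klein_orbit t x.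
Proof.
have sK := involutionK s_inv.
case/klein_orbitP => ->; apply/klein_orbitP; rewrite ?sK;
  by [apply: Or42 | apply: Or41 | apply: Or44 | apply: Or43].
Qed.

Lemma klein_orbitT x y : y \in klein_orbit t x -> t y \in klein_orbit t x.
Proof.
have tK := involutionK t_inv; have ts x := commute_permE x st.
case/klein_orbitP => ->; apply/klein_orbitP; rewrite ?ts ?tK;
  by [apply: Or43 | apply: Or44 | apply: Or41 | apply: Or42].
Qed.

Lemma klein_orbit_min_leader x z :
  z \in klein_orbit t x -> {in klein_orbit t x, forall y, z <= y} ->
  t z != z -> t z != s z -> z \in orbit_leaders t.
Proof.
move=> zQ zmin ntz ntsz; have tzQ := klein_orbitT zQ.
rewrite inE zmin ?klein_orbitS //=.
have [-> | ->] := sminP s (t z); rewrite ltn_neqAle zmin ?klein_orbitS // andbT.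
  by rewrite eq_sym (inj_eq val_inj).
rewrite (inj_eq val_inj); apply: contra_neq ntsz => e.
by rewrite {2}e (involutionK s_inv).
Qed.

Lemma agree_klein_orbit t' z : involution t' -> (s * t' == t' * s)%g ->
  t' z = t z -> {in klein_orbit t z, t' =1 t}.
Proof.
move=> t'_inv st' e y /klein_orbitP[] ->.
- exact: e.
- by rewrite !(commute_permE _ st) !(commute_permE _ st') e.
- by rewrite -{1}e !involutionK.
- by rewrite (commute_permE _ st) (commute_permE _ st') -{1}e !involutionK.
Qed.

Lemma card_orbit_leaders : 2 * #|orbit_leaders t| + #|excedances s| <= m.
Proof.
have sK := involutionK s_inv; have tK := involutionK t_inv.
pose O := [set x : 'I_m | x <= s x].
pose f x := smin s (t x).
have f_inj : {in orbit_leaders t &, injective f}.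
  move=> y1 y2; rewrite !inE => /andP[h1 _] /andP[h2 _] /(smin_inj s_inv)[|e].
    exact: perm_inj.
  have {}e : y1 = s y2 by apply: (@perm_inj _ t); rewrite e (commute_permE _ st).
  have e' : s y1 = y2 by rewrite e sK.
  by rewrite e' in h1; rewrite -e in h2; apply: ord_inj; lia.
have cardO : #|O| + #|excedances s| = m := card_excedances s_inv.
suff : #|orbit_leaders t| + #|f @: orbit_leaders t| <= #|O|.
  by rewrite (card_in_imset f_inj); lia.
apply: disjoint_leq_card.
- rewrite disjoint_subset; apply/subsetP => w; rewrite !inE => /andP[_ wlt].
  apply/imsetP => -[y]; rewrite inE => /andP[ys ylt] ew.
  have : smin s (t w) = y.
    rewrite ew /f; case: (sminP s (t y)) => ->; rewrite ?(commute_permE _ st) tK ?smin_perm //;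
    by rewrite smin_id.
  by move=> e; rewrite e ew /f in wlt; move: ylt wlt; lia.
- by apply/subsetP => x; rewrite !inE => /andP[].
- by apply/subsetP => _ /imsetP[x _ ->]; rewrite inE smin_leq.
Qed.

End Orbit.

Lemma commuting_involution_eq t t' :
  involution t -> involution t' -> (s * t == t * s)%g -> (s * t' == t' * s)%g ->
  fixed t = fixed t' -> coincidences t = coincidences t' ->
  {in orbit_leaders t, t =1 t'} -> t = t'.
Proof.
move=> t_inv t'_inv st st' eG eH eT; apply/permP => x.
have xQ : x \in klein_orbit t x by rewrite !inE eqxx.
have [z zQ zmin] := arg_minnP (fun y : 'I_m => val y) xQ.
suff tz : t' z = t z.
  by rewrite (agree_klein_orbit t_inv st t'_inv st' tz) // klein_orbit_sym.
have [tzz | ntzz] := eqVneq (t z) z.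
  have : z \in fixed t' by rewrite -eG inE tzz.
  by rewrite tzz inE => /eqP.
have [tzs | ntzs] := eqVneq (t z) (s z).
  have : z \in coincidences t' by rewrite -eH inE tzs.
  by rewrite tzs inE => /eqP.
have zT : z \in orbit_leaders t by apply: klein_orbit_min_leader zQ zmin ntzz ntzs.
by rewrite eT.
Qed.

End CommutingInvolutions.

Lemma pad_tuple_inj (T : Type) (x0 : T) n (l l' : seq T) :
  size l <= n -> size l = size l' ->
  [tuple nth x0 l i | i < n] = [tuple nth x0 l' i | i < n] -> l = l'.
Proof.
move=> ln ll' e; apply: (eq_from_nth (x0 := x0) ll') => i il.
have := congr1 (fun u => tnth u (Ordinal (leq_trans il ln))) e.
by rewrite !tnth_mktuple.
Qed.

Section Encoding.

Variables (m : nat) (pi : {set {set 'I_m}}).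
Hypothesis pi_le2 : partition_le2 pi.

Lemma card_leaders s t :
  involution s -> involution t -> (s * t == t * s)%g -> preserves pi s ->
  #|swap_leaders pi s| + #|orbit_leaders s t| <= (3 * m - 2 * nblocks2 pi) %/ 4.
Proof.
move=> s_inv t_inv st spi.
have := card_orbit_leaders s_inv t_inv st.
have := card_swap_leaders pi_le2 s_inv spi.
have := card_swap_leaders_singletons pi_le2 s_inv spi.
have := cardsID (singletons pi) (swap_leaders pi s).
lia.
Qed.

(* The recorded values are padded with [x0] to a common length [n]. *)
Definition encode (x0 : 'I_m) (n : nat) (st : {perm 'I_m} * {perm 'I_m}) :=
  let: (s, t) := st in
  (block_fixed pi s, fixed s, swap_leaders pi s, fixed t, coincidences s t, orbit_leaders s t,
   [tuple nth x0 (map s (enum (swap_leaders pi s)) ++ map t (enum (orbit_leaders s t))) i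
     | i < n]).

Lemma N2_bound (x0 : 'I_m) : N2 pi <= 64 ^ m * m ^ ((3 * m - 2 * nblocks2 pi) %/ 4).
Proof.
set n := _ %/ 4; rewrite /N2 -(card_in_imset (f := encode x0 n)).
  apply: leq_trans (max_card _) _.
  rewrite !card_prod !card_set card_tuple !card_ord -!expnD.
  by rewrite (_ : m + m + m + m + m + m = 6 * m) ?expnM //; lia.
move=> [s t] [s' t']; rewrite !inE /=.
move=> /and4P[s_inv t_inv st spi] /and4P[s'_inv t'_inv s't' s'pi].
move=> e; have := congr1 snd e; case: e => eE eF eD eG eH eT _; rewrite -eD -eT => etup.
have /eqP : [seq s x | x <- enum (swap_leaders pi s)] ++
            [seq t x | x <- enum (orbit_leaders s t)]
          = [seq s' x | x <- enum (swap_leaders pi s)] ++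
            [seq t' x | x <- enum (orbit_leaders s t)].
  apply: pad_tuple_inj etup; last by rewrite !size_cat !size_map.
  by rewrite size_cat !size_map -!cardE card_leaders.
rewrite eqseq_cat ?size_map // => /andP[/eqP/eq_in_map es /eqP/eq_in_map et].
have ess' : s = s'.
  by apply: (preserving_involution_eq pi_le2) => // x xD; apply: es; rewrite mem_enum.
subst s'; congr (_, _).
by apply: (commuting_involution_eq s_inv) => // x xT; apply: et; rewrite mem_enum.
Qed.

End Encoding.

Lemma INR_expn (a n : nat) : INR (a ^ n) = (INR a ^ n)%R.
Proof. by elim: n => [|n IH] //=; rewrite expnS -multE mult_INR IH. Qed.

Section FactorialBounds.

Local Open Scope R_scope.

Lemma succ_pow_le (n : nat) : INR n.+1 ^ n <= 3 * INR n ^ n.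
Proof.
case: n => [|n]; first by rewrite /=; lra.
(* (1 + 1/a)^a <= e <= 3 *)
set a := INR n.+1; have a_gt0 : 0 < a by apply: lt_0_INR; lia.
have -> : INR n.+2 = a * (1 + / a) by rewrite S_INR -/a; field; lra.
have e_pow : exp (/ a) ^ n.+1 = exp 1.
  rewrite -Rpower_pow; last exact: exp_pos.
  by rewrite /Rpower ln_exp -/a; congr exp; field; lra.
have : (1 + / a) ^ n.+1 <= exp (/ a) ^ n.+1.
  apply: pow_incr; split; last exact: exp_ineq1_le.
  by have := Rinv_0_lt_compat _ a_gt0; lra.
have := exp_le_3; have : 0 <= a ^ n.+1 by apply: pow_le; lra.
rewrite Rpow_mult_distr e_pow; nra.
Qed.

Lemma pow_self_le_fact (n : nat) : INR n ^ n <= 3 ^ n * INR n`!.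
Proof.
elim: n => [|n IH]; first by rewrite /=; lra.
rewrite factS mult_INR -!tech_pow_Rmult.
have := succ_pow_le n; have := pos_INR n.+1; nra.
Qed.

Lemma pow_le_Rpower_fact (m r : nat) (e : R) :
  (1 <= m)%N -> 0 <= e <= 1 -> INR r <= INR m * e ->
  INR m ^ r <= 3 ^ m * Rpower (INR m`!) e.
Proof.
(* m^r <= m^(m e) = (m^m)^e <= (3^m m!)^e <= 3^m (m!)^e *)
move=> m_ge1 [e_ge0 e_le1] r_le; have M_ge1 : 1 <= INR m by apply: (le_INR 1); lia.
have fact_gt0 : 0 < INR m`! by apply: lt_0_INR; have := fact_gt0 m; lia.
rewrite -Rpower_pow; last lra.
apply: Rle_trans (Rle_Rpower _ _ _ M_ge1 r_le) _.
rewrite -Rpower_mult Rpower_pow; last lra.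
apply: Rle_trans (Rle_Rpower_l _ _ _ e_ge0 _) _.
  by split; [apply: pow_lt; lra | apply: pow_self_le_fact].
rewrite -Rpower_mult_distr; [|apply: pow_lt; lra | done].
apply: Rmult_le_compat_r; first by apply: Rlt_le; apply: exp_pos.
rewrite -{2}(Rpower_1 (3 ^ m)); last by apply: pow_lt; lra.
by apply: Rle_Rpower => //; apply: pow_R1_Rle; lra.
Qed.

Lemma exponent_bounds (m k r : nat) :
  (1 <= m)%N -> (2 * k <= m)%N -> (4 * r + 2 * k <= 3 * m)%N ->
  let e := 3 / 4 - INR k / (2 * INR m) in 0 <= e <= 1 /\ INR r <= INR m * e.
Proof.
move=> m_ge1 k_le r_le e; have M_ge1 : 1 <= INR m by apply: (le_INR 1); lia.
have := le_INR _ _ (elimT leP k_le); have := le_INR _ _ (elimT leP r_le).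
rewrite !(mult_INR, plus_INR) /= => hr hk.
have Me : INR m * e = 3 / 4 * INR m - INR k / 2 by rewrite /e; field; lra.
have := pos_INR k; have := pos_INR r; split; [split|]; nra.
Qed.

End FactorialBounds.

Theorem lemma5p3 :
  exists C : R, (0 < C)%R /\
    forall (m : nat) (pi : {set {set 'I_m}}),
      (1 <= m)%N -> partition_le2 pi ->
      (INR (N2 pi) <=
         C ^ m * Rpower (INR (m`!))
                   (3 / 4 - INR (nblocks2 pi) / (2 * INR m)))%R.
Proof.
exists 192%R; split; first lra.
move=> m pi m_ge1 pi_le2.
have k_le : (2 * nblocks2 pi <= m)%N by have := card_singletons_pairs pi_le2; lia.
set k := nblocks2 pi in k_le *; set r := ((3 * m - 2 * k) %/ 4)%N.
have r_le : (4 * r + 2 * k <= 3 * m)%N by rewrite /r; lia.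
have [e_range r_le_e] := exponent_bounds m_ge1 k_le r_le.
apply: (@Rle_trans _ (INR (64 ^ m * m ^ r))).
  by apply/le_INR/leP; apply: N2_bound pi_le2 (Ordinal m_ge1).
rewrite mult_INR !INR_expn (_ : INR 64 = 64%R); last by rewrite /=; lra.
rewrite (_ : 192 = 64 * 3)%R; last lra.
rewrite Rpow_mult_distr Rmult_assoc.
apply: Rmult_le_compat_l; first by apply: pow_le; lra.
exact: pow_le_Rpower_fact.
Qed.
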